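(* For any ring $R$ (associative with identity), the matrix rings $M_2(R)$ and $M_3(R)$ are 2-clean.
   Context: A ring $S$ is 2-clean if every element of $S$ can be written as $e+u_1+u_2$ with $e=e^2\in S$ and $u_1,u_2$ units of $S$. *)

From mathcomp Require Import all_boot all_algebra.
Set Implicit Arguments. Unset Strict Implicit. Unset Printing Implicit Defensive.
Import GRing.Theory.
Local Open Scope ring_scope.

Definition is_unit (S : pzRingType) (u : S) : Prop :=
  exists v : S, u * v = 1 /\ v * u = 1.

Definition two_clean (S : pzRingType) : Prop :=
  forall a : S, exists e u1 u2 : S,
    e * e = e /\ is_unit u1 /\ is_unit u2 /\ a = e + u1 + u2.

From mathcomp Require Import all_boot all_algebra.
Set Implicit Arguments. Unset Strict Implicit. Unset Printing Implicit Defensive.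
Import GRing.Theory.
Local Open Scope ring_scope.

(* Take E idempotent with first row (1, r) and zeros elsewhere, U2 lower
   unitriangular, and U1 = T * C with T upper unitriangular and C the companion
   matrix [[0,1],[1,q]] (resp. [[0,0,1],[1,0,y],[0,1,z]]), so that U1 and U2 are
   units over any ring.  E + U1 + U2 then has its entries given by a triangular
   system in the free parameters, solved by subtractions alone, without ever
   inverting an element of R. *)

Lemma is_unitM (S : pzRingType) (u v : S) :
  is_unit u -> is_unit v -> is_unit (u * v).
Proof.
move=> [u' [uu' u'u]] [v' [vv' v'v]]; exists (v' * u'); split.
  by rewrite mulrA -(mulrA u) vv' mulr1 uu'.
by rewrite mulrA -(mulrA v') u'u mulr1 v'v.
Qed.

Section Matrices.
Variable R : pzRingType.

Definition scalar_simp :=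
  (@mul0r R, @mulr0 R, @mul1r R, @mulr1 R, @add0r R, @addr0 R).

Definition mx2 (a b c d : R) : 'M[R]_2 :=
  \matrix_(i, j) nth 0 (nth [::] [:: [:: a; b]; [:: c; d]] i) j.

Lemma mx2_eta (A : 'M[R]_2) : A = mx2 (A 0 0) (A 0 1) (A 1 0) (A 1 1).
Proof.
apply/matrixP => -[[|[|i]] ?] -[[|[|j]] ?] //; rewrite mxE /=;
  by congr (A _ _); apply: val_inj.
Qed.

Lemma mx2_1 : 1 = mx2 1 0 0 1.
Proof. by apply/matrixP => -[[|[|i]] ?] -[[|[|j]] ?] //; rewrite !mxE. Qed.

Lemma mx2D a b c d a' b' c' d' :
  mx2 a b c d + mx2 a' b' c' d' = mx2 (a + a') (b + b') (c + c') (d + d').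
Proof. by apply/matrixP => -[[|[|i]] ?] -[[|[|j]] ?] //; rewrite !mxE. Qed.

Lemma mx2M a b c d a' b' c' d' :
  mx2 a b c d * mx2 a' b' c' d' =
  mx2 (a * a' + b * c') (a * b' + b * d') (c * a' + d * c') (c * b' + d * d').
Proof.
apply/matrixP => -[[|[|i]] ?] -[[|[|j]] ?] //;
  by rewrite -mulmxE !mxE !big_ord_recr big_ord0 /= !mxE add0r.
Qed.

Lemma mx2_top_row_idem r : mx2 1 r 0 0 * mx2 1 r 0 0 = mx2 1 r 0 0.
Proof. by rewrite mx2M !scalar_simp. Qed.

Lemma is_unit_mx2_upper x : is_unit (mx2 1 x 0 1).
Proof.
by exists (mx2 1 (- x) 0 1); rewrite !mx2M mx2_1 !scalar_simp addNr subrr.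
Qed.

Lemma is_unit_mx2_lower x : is_unit (mx2 1 0 x 1).
Proof.
by exists (mx2 1 0 (- x) 1); rewrite !mx2M mx2_1 !scalar_simp addNr subrr.
Qed.

Lemma is_unit_mx2_companion q : is_unit (mx2 0 1 1 q).
Proof.
by exists (mx2 (- q) 1 1 0); rewrite !mx2M mx2_1 !scalar_simp addNr.
Qed.

Lemma mx2_clean_sum r x q l :
  mx2 1 r 0 0 + mx2 1 x 0 1 * mx2 0 1 1 q + mx2 1 0 l 1 =
  mx2 (x + 1 + 1) (r + (1 + x * q)) (l + 1) (q + 1).
Proof.
by rewrite mx2M !scalar_simp !mx2D !scalar_simp [1 + x]addrC [1 + l]addrC.
Qed.

Lemma two_clean_mx2 : two_clean 'M[R]_2.
Proof.
move=> A; rewrite [A]mx2_eta.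
set x := A 0 0 - 1 - 1; set q := A 1 1 - 1.
exists (mx2 1 (A 0 1 - (1 + x * q)) 0 0), (mx2 1 x 0 1 * mx2 0 1 1 q),
  (mx2 1 0 (A 1 0 - 1) 1).
split; first exact: mx2_top_row_idem.
split.
  by apply: is_unitM; [exact: is_unit_mx2_upper | exact: is_unit_mx2_companion].
split; first exact: is_unit_mx2_lower.
by rewrite mx2_clean_sum !subrK.
Qed.

Definition mx3 (a b c d e f g h k : R) : 'M[R]_3 :=
  \matrix_(i, j)
    nth 0 (nth [::] [:: [:: a; b; c]; [:: d; e; f]; [:: g; h; k]] i) j.

Lemma mx3_eta (A : 'M[R]_3) :
  A = mx3 (A 0 0) (A 0 1) (A 0 2) (A 1 0) (A 1 1) (A 1 2)
          (A 2 0) (A 2 1) (A 2 2).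
Proof.
apply/matrixP => -[[|[|[|i]]] ?] -[[|[|[|j]]] ?] //; rewrite mxE /=;
  by congr (A _ _); apply: val_inj.
Qed.

Lemma mx3_1 : 1 = mx3 1 0 0 0 1 0 0 0 1.
Proof.
by apply/matrixP => -[[|[|[|i]]] ?] -[[|[|[|j]]] ?] //; rewrite !mxE.
Qed.

Lemma mx3D a b c d e f g h k a' b' c' d' e' f' g' h' k' :
  mx3 a b c d e f g h k + mx3 a' b' c' d' e' f' g' h' k' =
  mx3 (a + a') (b + b') (c + c') (d + d') (e + e') (f + f')
      (g + g') (h + h') (k + k').
Proof.
by apply/matrixP => -[[|[|[|i]]] ?] -[[|[|[|j]]] ?] //; rewrite !mxE.
Qed.

Lemma mx3M a b c d e f g h k a' b' c' d' e' f' g' h' k' :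
  mx3 a b c d e f g h k * mx3 a' b' c' d' e' f' g' h' k' =
  mx3 (a * a' + b * d' + c * g') (a * b' + b * e' + c * h')
      (a * c' + b * f' + c * k')
      (d * a' + e * d' + f * g') (d * b' + e * e' + f * h')
      (d * c' + e * f' + f * k')
      (g * a' + h * d' + k * g') (g * b' + h * e' + k * h')
      (g * c' + h * f' + k * k').
Proof.
apply/matrixP => -[[|[|[|i]]] ?] -[[|[|[|j]]] ?] //;
  by rewrite -mulmxE !mxE !big_ord_recr big_ord0 /= !mxE add0r.
Qed.

Lemma mx3_top_row_idem r s :
  mx3 1 r s 0 0 0 0 0 0 * mx3 1 r s 0 0 0 0 0 0 = mx3 1 r s 0 0 0 0 0 0.
Proof. by rewrite mx3M !scalar_simp. Qed.

Lemma is_unit_mx3_upper p s : is_unit (mx3 1 p 0 0 1 s 0 0 1).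
Proof.
exists (mx3 1 (- p) (p * s) 0 1 (- s) 0 0 1).
by rewrite !mx3M mx3_1 !scalar_simp mulrN mulNr !addNr !subrr.
Qed.

Lemma is_unit_mx3_lower l m n : is_unit (mx3 1 0 0 l 1 0 m n 1).
Proof.
exists (mx3 1 0 0 (- l) 1 0 (n * l - m) (- n) 1).
rewrite !mx3M mx3_1 !scalar_simp mulrN mulNr !subrr !addNr.
by rewrite addrA subrK subrr addrAC subrK subrr.
Qed.

Lemma is_unit_mx3_companion y z : is_unit (mx3 0 0 1 1 0 y 0 1 z).
Proof.
exists (mx3 (- y) 1 0 (- z) 0 1 1 0 0).
by rewrite !mx3M mx3_1 !scalar_simp !addNr.
Qed.

Lemma mx3_clean_sum r1 r2 p s y z l m n :
  mx3 1 r1 r2 0 0 0 0 0 0 + mx3 1 p 0 0 1 s 0 0 1 * mx3 0 0 1 1 0 y 0 1 z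
    + mx3 1 0 0 l 1 0 m n 1 =
  mx3 (p + 1 + 1) r1 (r2 + (1 + p * y)) (l + 1) (s + 1) (y + s * z)
      m (n + 1) (z + 1).
Proof.
rewrite mx3M !scalar_simp !mx3D !scalar_simp.
by rewrite [1 + p]addrC [1 + l]addrC [1 + n]addrC.
Qed.

Lemma two_clean_mx3 : two_clean 'M[R]_3.
Proof.
move=> A; rewrite [A]mx3_eta.
set z := A 2 2 - 1; set s := A 1 1 - 1; set y := A 1 2 - s * z.
set p := A 0 0 - 1 - 1.
exists (mx3 1 (A 0 1) (A 0 2 - (1 + p * y)) 0 0 0 0 0 0),
  (mx3 1 p 0 0 1 s 0 0 1 * mx3 0 0 1 1 0 y 0 1 z),
  (mx3 1 0 0 (A 1 0 - 1) 1 0 (A 2 0) (A 2 1 - 1) 1).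
split; first exact: mx3_top_row_idem.
split.
  by apply: is_unitM; [exact: is_unit_mx3_upper | exact: is_unit_mx3_companion].
split; first exact: is_unit_mx3_lower.
by rewrite mx3_clean_sum !subrK.
Qed.

End Matrices.

Theorem lemma3 (R : pzRingType) :
  two_clean 'M[R]_2 /\ two_clean 'M[R]_3.
Proof. by split; [apply: two_clean_mx2 | apply: two_clean_mx3]. Qed.
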